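(* In the iAPG setting described in the context, assume $\mu>0$ and $\varepsilon_k=0$ for all $k\ge0$; let $\kappa=\frac{L_g}{\gamma_{\mathrm{dec}}\mu}$ and $C_L=\frac{L_g+L_h}{\sqrt{\underline L}}+\sqrt{\frac{L_g+L_h}{\gamma_{\mathrm{dec}}}}$. Suppose that for each $k\ge0$ a step $\tilde\eta_k$ with $\frac{\gamma_{\mathrm{dec}}}{L_g+L_h}<\tilde\eta_k\le\frac1{\underline L}$ is given and $\tilde x^{(k)}=\mathrm{prox}_{\tilde\eta_k r}\big(x^{(k)}-\tilde\eta_k(\nabla g(x^{(k)})+\nabla h(x^{(k)}))\big)$ satisfies $g(\tilde x^{(k)})+h(\tilde x^{(k)})\le g(x^{(k)})+h(x^{(k)})+\langle\nabla g(x^{(k)})+\nabla h(x^{(k)}),\tilde x^{(k)}-x^{(k)}\rangle+\frac1{2\tilde\eta_k}\|\tilde x^{(k)}-x^{(k)}\|^2$. Then for all $k\ge0$, $$\mathrm{dist}\big(0,\partial F(\tilde x^{(k)})\big)\le C_L\sqrt{2\Big(F(x^{(0)})-F^*+\frac{\gamma_0}{2}\|x^*-z^{(0)}\|^2\Big)}\Big(1-\sqrt{1/\kappa}\Big)^{k/2}.$$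
   Context: iAPG setting. Let $g,h:\mathbb R^n\to\mathbb R$ and $r:\mathbb R^n\to\mathbb R\cup\{+\infty\}$, where $g$ is convex, $\mu$-strongly convex for some $\mu\ge0$, and differentiable with $L_g$-Lipschitz gradient ($L_g>0$); $h$ is convex and differentiable with $L_h$-Lipschitz gradient; $r$ is proper, closed and convex. Put $H=h+r$, $F=g+H$, and assume $F$ attains its minimum value $F^*$ at some point $x^*$. Fix constants $\gamma_{\mathrm{dec}}\in(0,1)$ and $\underline L>0$ with $\mu\le\underline L\le L_g$. We consider points $x^{(k)},z^{(k)},y^{(k)}\in\mathbb R^n$ and scalars $\eta_k>0,\alpha_k>0,\gamma_k>0,\varepsilon_k\ge0$ ($k\ge0$) such that $x^{(0)}=z^{(0)}\in\mathrm{dom}(H)$, $\gamma_0\ge\mu$, and for every $k\ge0$: (i) $\gamma_{\mathrm{dec}}/L_g<\eta_k\le1/\underline L$; (ii) $\gamma_{k+1}=\alpha_k^2/\eta_k=(1-\alpha_k)\gamma_k+\alpha_k\mu$; (iii) $y^{(k)}=\frac{1}{\alpha_k\gamma_k+\gamma_{k+1}}\big(\alpha_k\gamma_k z^{(k)}+\gamma_{k+1}x^{(k)}\big)$; (iv) $\mathrm{dist}\big(0,\ \nabla g(y^{(k)})+\tfrac1{\eta_k}(x^{(k+1)}-y^{(k)})+\partial H(x^{(k+1)})\big)\le\varepsilon_k$; (v) $g(x^{(k+1)})\le g(y^{(k)})+\langle\nabla g(y^{(k)}),x^{(k+1)}-y^{(k)}\rangle+\frac1{2\eta_k}\|x^{(k+1)}-y^{(k)}\|^2$;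 (vi) $z^{(k+1)}=x^{(k)}+\frac1{\alpha_k}(x^{(k+1)}-x^{(k)})$. Here $\partial$ denotes the convex subdifferential and $\mathrm{dist}(0,S)=\inf_{s\in S}\|s\|$. $\mathrm{prox}_{\eta r}(v)=\arg\min_u\{\frac12\|u-v\|^2+\eta r(u)\}$. *)

From HB Require Import structures.
From mathcomp Require Import all_boot all_order all_algebra.
From mathcomp Require Import all_classical all_reals all_analysis.
Set Implicit Arguments. Unset Strict Implicit. Unset Printing Implicit Defensive.
Import Order.TTheory GRing.Theory Num.Theory.
Local Open Scope classical_set_scope.
Local Open Scope ring_scope.

Section Defs.
Variables (R : realType) (n : nat).
Notation vec := 'rV[R]_n.

Definition dotv (u v : vec) : R := \sum_(i < n) u ord0 i * v ord0 i.
Definition norm2 (u : vec) : R := Num.sqrt (dotv u u).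

Definition convex_fun (f : vec -> R) : Prop :=
  forall x y (t : R), 0 <= t <= 1 ->
    f (t *: x + (1 - t) *: y) <= t * f x + (1 - t) * f y.
Definition strongly_convex (mu : R) (f : vec -> R) : Prop :=
  forall x y (t : R), 0 <= t <= 1 ->
    f (t *: x + (1 - t) *: y)
      <= t * f x + (1 - t) * f y - mu / 2 * t * (1 - t) * norm2 (x - y) ^+ 2.

Definition has_gradient (f : vec -> R) (gf : vec -> vec) : Prop :=
  forall x (e : R), 0 < e -> exists2 d : R, 0 < d &
    forall hv : vec, norm2 hv < d ->
      `| f (x + hv) - f x - dotv (gf x) hv | <= e * norm2 hv.

Definition lipschitz_map (G : vec -> vec) (L : R) : Prop :=
  forall x y, norm2 (G x - G y) <= L * norm2 (x - y).

(* extended-valued functions R^n -> R ∪ {+oo} *)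
Definition no_minfty (f : vec -> \bar R) : Prop := forall x, f x != -oo%E.
Definition proper_fun (f : vec -> \bar R) : Prop :=
  no_minfty f /\ exists x, f x != +oo%E.
(* closed = lower semicontinuous *)
Definition lsc_fun (f : vec -> \bar R) : Prop :=
  forall x (a : R), (a%:E < f x)%E -> exists2 d : R, 0 < d &
    forall y, norm2 (y - x) < d -> (a%:E < f y)%E.
Definition econvex_fun (f : vec -> \bar R) : Prop :=
  forall x y (t : R), 0 < t < 1 ->
    (f (t *: x + (1 - t) *: y)%R <= t%:E * f x + (1 - t)%:E * f y)%E.

Definition subdiff (f : vec -> \bar R) (x : vec) : set vec :=
  [set v | f x \is a fin_num /\
           forall y, (f x + (dotv v (y - x))%:E <= f y)%E].

(* dist(0,S) = inf_{s in S} ||s|| (= +oo if S is empty) *)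
Definition dist0 (S : set vec) : \bar R :=
  ereal_inf [set (norm2 s)%:E | s in S].

Definition is_prox (eta : R) (r : vec -> \bar R) (v u : vec) : Prop :=
  forall w, ((1 / 2 * norm2 (u - v) ^+ 2)%:E + eta%:E * r u
             <= (1 / 2 * norm2 (w - v) ^+ 2)%:E + eta%:E * r w)%E.

End Defs.

(* Along the accelerated iterates the Lyapunov function
   Phi k = F(x_k) - Fstar + gamma_k/2 |xstar - z_k|^2 contracts by the factor 1 - alpha_k per step:
   the (exact) prox-gradient inequality at the convex combination alpha_k xstar + (1 - alpha_k) x_k,
   together with strong convexity of g, reduces this to a scalar inequality in the parameters.
   Since alpha_k^2 = eta_k gamma_(k+1) >= (gdec / Lg) mu, we get alpha_k >= sqrt (1 / kappa), hence
   F(x_k) - Fstar <= (1 - sqrt (1 / kappa))^k Phi 0.  The auxiliary prox-gradient step from x_k produces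
   the subgradient grad(g+h)(xt_k) - grad(g+h)(x_k) - (xt_k - x_k) / etat_k of F at xt_k, of norm at
   most (Lg + Lh + 1 / etat_k) |xt_k - x_k|, and its sufficient decrease gives
   |xt_k - x_k|^2 <= 2 etat_k (F(x_k) - Fstar); the bounds on etat_k turn this into
   C_L sqrt (2 (F(x_k) - Fstar)). *)

From HB Require Import structures.
From mathcomp Require Import all_boot all_order all_algebra.
From mathcomp Require Import all_classical all_reals all_analysis.
From mathcomp Require Import ring lra.
Import Order.TTheory GRing.Theory Num.Theory.
Local Open Scope classical_set_scope.
Local Open Scope ring_scope.
Set Implicit Arguments. Unset Strict Implicit. Unset Printing Implicit Defensive.

Section Euclidean.
Variables (R : realType) (n : nat).
Implicit Types (u v w : 'rV[R]_n) (a : R).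

Lemma dotvC u v : dotv u v = dotv v u.
Proof. by apply: eq_bigr => i _; rewrite mulrC. Qed.

Lemma dotvDl u v w : dotv (u + v) w = dotv u w + dotv v w.
Proof. by rewrite /dotv -big_split; apply: eq_bigr => i _; rewrite !mxE mulrDl. Qed.

Lemma dotvZl a u w : dotv (a *: u) w = a * dotv u w.
Proof. by rewrite /dotv mulr_sumr; apply: eq_bigr => i _; rewrite !mxE mulrA. Qed.

Lemma dotvNl u w : dotv (- u) w = - dotv u w.
Proof. by rewrite -scaleN1r dotvZl mulN1r. Qed.

Lemma dotvDr u v w : dotv w (u + v) = dotv w u + dotv w v.
Proof. by rewrite dotvC dotvDl !(dotvC w). Qed.

Lemma dotvZr a u w : dotv w (a *: u) = a * dotv w u.
Proof. by rewrite dotvC dotvZl dotvC. Qed.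

Lemma dotvNr u w : dotv w (- u) = - dotv w u.
Proof. by rewrite dotvC dotvNl dotvC. Qed.

Definition dotvE := (dotvDl, dotvDr, dotvNl, dotvNr, dotvZl, dotvZr).

Lemma dotvv_ge0 u : 0 <= dotv u u.
Proof. by apply: sumr_ge0 => i _; rewrite -expr2 sqr_ge0. Qed.

Lemma dotvv_eq0 u : dotv u u = 0 -> u = 0.
Proof.
move=> /eqP; rewrite /dotv psumr_eq0 => [/allP u0|i _]; last by rewrite -expr2 sqr_ge0.
apply/rowP => i; rewrite mxE; apply/eqP.
by rewrite -sqrf_eq0 expr2; exact: u0 (mem_index_enum _).
Qed.

Lemma norm2_ge0 u : 0 <= norm2 u.
Proof. exact: sqrtr_ge0. Qed.

Lemma sqr_norm2 u : norm2 u ^+ 2 = dotv u u.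
Proof. by rewrite sqr_sqrtr // dotvv_ge0. Qed.

Lemma norm2Z a u : norm2 (a *: u) = `|a| * norm2 u.
Proof. by rewrite /norm2 dotvZl dotvZr mulrA sqrtrM ?sqr_ge0 // -expr2 sqrtr_sqr. Qed.

Lemma norm2N u : norm2 (- u) = norm2 u.
Proof. by rewrite -scaleN1r norm2Z normrN normr1 mul1r. Qed.

Lemma sqr_norm2Z a u : norm2 (a *: u) ^+ 2 = a ^+ 2 * norm2 u ^+ 2.
Proof. by rewrite norm2Z exprMn real_normK ?num_real. Qed.

Lemma sqr_norm2D u v :
  norm2 (u + v) ^+ 2 = norm2 u ^+ 2 + 2 * dotv u v + norm2 v ^+ 2.
Proof. by rewrite !sqr_norm2 !dotvE (dotvC v u); ring. Qed.

Lemma cauchy_schwarz u v : dotv u v <= norm2 u * norm2 v.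
Proof.
have [/dotvv_eq0 ->|v0] := eqVneq (dotv v v) 0.
  by rewrite dotvC -(scale0r 0) dotvZl mul0r mulr_ge0 ?norm2_ge0.
set A := dotv u u; set B := dotv v v; set C := dotv u v.
have B_gt0 : 0 < B by rewrite lt0r v0 dotvv_ge0.
have := dotvv_ge0 (B *: u - C *: v).
rewrite !dotvE (dotvC v u) -/A -/B -/C => BuCv.
have C2_le : C ^+ 2 <= A * B by nra.
rewrite /norm2 -/A -/B -sqrtrM ?dotvv_ge0 // (le_trans (ler_norm C)) //.
by rewrite -sqrtr_sqr ler_wsqrtr.
Qed.

Lemma ler_norm2D u v : norm2 (u + v) <= norm2 u + norm2 v.
Proof.
rewrite -ler_sqr ?nnegrE ?addr_ge0 ?norm2_ge0 // sqr_norm2D sqrrD.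
by have := cauchy_schwarz u v; lra.
Qed.

End Euclidean.

Lemma ler_of_small_steps (R : realType) (A B M : R) :
  (exists2 d, 0 < d & forall t, 0 < t < d -> A - t * M <= B) -> A <= B.
Proof.
move=> [d d_gt0 step]; apply/ler_addgt0Pr => e e_gt0.
have M1_gt0 : 0 < `|M| + 1 by rewrite ltr_wpDl.
set t := Order.min (d / 2) (e / (`|M| + 1)).
have t_gt0 : 0 < t by rewrite lt_min !divr_gt0.
have t_lt_d : t < d by rewrite gt_min ltr_pdivrMr // ltr_pMr // ltr1n.
have tM_le : t * `|M| <= e.
  have : t * (`|M| + 1) <= e by rewrite -ler_pdivlMr // ge_min lexx orbT.
  by have := normr_ge0 M; nra.
have := step t; rewrite t_gt0 t_lt_d => /(_ isT).
by have := ler_norm M; nra.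
Qed.

Section Convexity.
Variables (R : realType) (n : nat).
Implicit Types (u v w : 'rV[R]_n).

Lemma convex_strongly_convex0 (f : 'rV[R]_n -> R) :
  convex_fun f -> strongly_convex 0 f.
Proof. by move=> f_cvx u v t t01; rewrite !mul0r subr0; exact: f_cvx. Qed.

Lemma strongly_convex_grad_le (f : 'rV[R]_n -> R) gradf (mu : R) u v :
  strongly_convex mu f -> has_gradient f gradf ->
  f u + dotv (gradf u) (v - u) + mu / 2 * norm2 (v - u) ^+ 2 <= f v.
Proof.
move=> f_sc f_grad; set D := norm2 (v - u).
have D_ge0 : 0 <= D := norm2_ge0 _.
suff : dotv (gradf u) (v - u) + mu / 2 * D ^+ 2 <= f v - f u by lra.
apply/ler_addgt0Pr => e e_gt0.
have eD : e / (D + 1) * D <= e.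
  by rewrite mulrAC ler_pdivrMr ?ltr_wpDl //; nra.
have [d d_gt0 f_lin] := f_grad u (e / (D + 1)) (divr_gt0 e_gt0 (ltr_wpDl D_ge0 ltr01)).
apply: (@ler_of_small_steps _ _ _ (mu / 2 * D ^+ 2)).
exists (Order.min 1 (d / (D + 1))) => [|t]; first by rewrite lt_min ltr01 divr_gt0 ?ltr_wpDl.
rewrite lt_min => /andP[t_gt0 /andP[t_lt1 t_small]].
have tD_lt : t * D < d by move: t_small; rewrite ltr_pdivlMr ?ltr_wpDl //; nra.
have := f_lin (t *: (v - u)); rewrite norm2Z (ger0_norm (ltW t_gt0)) dotvZr -/D.
move=> /(_ tD_lt) /ler_normlP[f_lo _].
have := f_sc v u t; rewrite (ltW t_gt0) (ltW t_lt1) -/D => /(_ isT).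
have -> : t *: v + (1 - t) *: u = u + t *: (v - u).
  by rewrite scalerBl scale1r scalerBr addrCA.
move=> f_up.
have : t * (dotv (gradf u) (v - u) + mu / 2 * D ^+ 2 - t * (mu / 2 * D ^+ 2))
       <= t * (f v - f u + e) by nra.
by rewrite ler_pM2l.
Qed.

Lemma econvex_fine_le (r : 'rV[R]_n -> \bar R) u v (t : R) :
  no_minfty r -> econvex_fun r -> r u \is a fin_num -> r v \is a fin_num ->
  0 < t < 1 ->
  r (t *: u + (1 - t) *: v) \is a fin_num /\
  fine (r (t *: u + (1 - t) *: v)) <= t * fine (r u) + (1 - t) * fine (r v).
Proof.
move=> r_nominfty r_cvx ru_fin rv_fin t01.
have := r_cvx u v t t01; rewrite -(fineK ru_fin) -(fineK rv_fin) -!EFinM -EFinD.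
have := r_nominfty (t *: u + (1 - t) *: v).
by case: (r _) => [c _|//|//]; rewrite lee_fin.
Qed.

Lemma convex_add_econvex_le (h : 'rV[R]_n -> R) (r : 'rV[R]_n -> \bar R) u v (t : R) :
  convex_fun h -> no_minfty r -> econvex_fun r ->
  r u \is a fin_num -> r v \is a fin_num -> 0 < t <= 1 ->
  r (t *: u + (1 - t) *: v) \is a fin_num /\
  h (t *: u + (1 - t) *: v) + fine (r (t *: u + (1 - t) *: v))
    <= t * (h u + fine (r u)) + (1 - t) * (h v + fine (r v)).
Proof.
move=> h_cvx r_nominfty r_cvx ru_fin rv_fin /andP[t_gt0 t_le1].
have [->|t_neq1] := eqVneq t 1.
  by rewrite subrr scale0r addr0 scale1r mul0r addr0 mul1r.
have t01 : 0 < t < 1 by rewrite t_gt0 lt_neqAle t_neq1.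
have [comb_fin comb_le] := econvex_fine_le r_nominfty r_cvx ru_fin rv_fin t01.
split=> //; have := h_cvx u v t; rewrite ltW //= => /(_ t_le1); lra.
Qed.

End Convexity.

Section Prox.
Variables (R : realType) (n : nat) (r : 'rV[R]_n -> \bar R) (et : R).
Hypotheses (et_gt0 : 0 < et) (r_nominfty : no_minfty r) (r_cvx : econvex_fun r).
Implicit Types (u v w : 'rV[R]_n).

Lemma prox_fin_num v p w :
  is_prox et r v p -> r w \is a fin_num -> r p \is a fin_num.
Proof.
move=> p_prox rw_fin; have := p_prox w; have := r_nominfty p.
rewrite -(fineK rw_fin) -EFinM -EFinD.
by case: (r p) => [//| |//] _; rewrite mulry gtr0_sg // mul1e addey // leye_eq.
Qed.

Lemma prox_subgradient v p w :
  is_prox et r v p -> r p \is a fin_num -> r w \is a fin_num ->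
  fine (r p) + dotv (et^-1 *: (v - p)) (w - p) <= fine (r w).
Proof.
move=> p_prox rp_fin rw_fin; set a := fine (r p); set b := fine (r w).
suff : et * a + dotv (v - p) (w - p) <= et * b.
  by move=> ?; rewrite dotvZl -(ler_pM2l et_gt0) mulrDr mulrA divff ?mul1r // gt_eqF.
apply: (@ler_of_small_steps _ _ _ (norm2 (w - p) ^+ 2 / 2)).
exists 1 => // t t01.
have [rc_fin rc_le] := econvex_fine_le r_nominfty r_cvx rw_fin rp_fin t01.
have := p_prox (t *: w + (1 - t) *: p).
rewrite -(fineK rc_fin) -(fineK rp_fin) -!EFinM -!EFinD lee_fin -/a.
have -> : t *: w + (1 - t) *: p - v = (p - v) + t *: (w - p).
  by apply/rowP => i; rewrite !mxE; ring.
rewrite [norm2 (_ + t *: _) ^+ 2]sqr_norm2D sqr_norm2Z dotvZr -opprB dotvNl => prox_le.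
have : et * fine (r (t *: w + (1 - t) *: p)) <= et * (t * b + (1 - t) * a).
  by rewrite ler_pM2l.
move: t01 => /andP[t_gt0 _] rc_le'.
have : t * (et * a + dotv (v - p) (w - p) - t * (norm2 (w - p) ^+ 2 / 2))
       <= t * (et * b) by nra.
by rewrite ler_pM2l.
Qed.

End Prox.

Lemma dist0_le_norm2 (R : realType) (n : nat) (S : set 'rV[R]_n) s :
  S s -> (dist0 S <= (norm2 s)%:E)%E.
Proof. by move=> Ss; apply: ge_ereal_inf; exists (norm2 s)%:E => //; exists s. Qed.

Lemma dist0_lt (R : realType) (n : nat) (S : set 'rV[R]_n) (d : R) :
  (dist0 S < d%:E)%E -> exists2 s, S s & norm2 s < d.
Proof. by move=> /ereal_inf_lt[_ [s Ss <-]]; rewrite lte_fin; exists s. Qed.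

Section APGStep.
Variables (R : realType) (n : nat) (g : 'rV[R]_n -> R) (gradg : 'rV[R]_n -> 'rV[R]_n).
Variable mu : R.
Hypotheses (g_sc : strongly_convex mu g) (g_grad : has_gradient g gradg).

(* [dist0 S <= 0] only yields elements of [S] of arbitrarily small norm, hence the
   [d]-approximate optimality condition. *)
Lemma inexact_prox_grad_le (et : R) (y x1 u : 'rV[R]_n) (H1 Hu : R) :
  0 < et ->
  g x1 <= g y + dotv (gradg y) (x1 - y) + 1 / (2 * et) * norm2 (x1 - y) ^+ 2 ->
  (forall d, 0 < d -> exists w, H1 + dotv w (u - x1) <= Hu /\
     norm2 (gradg y + et^-1 *: (x1 - y) + w) < d) ->
  g x1 + H1 <= g u + Hu + (1 / (2 * et) - mu / 2) * norm2 (u - y) ^+ 2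
               - 1 / (2 * et) * norm2 (u - x1) ^+ 2.
Proof.
move=> et_gt0 g_desc approx_subgrad.
set c := 1 / (2 * et); set p := gradg y.
set M := norm2 (u - x1); set Q1 := norm2 (x1 - y) ^+ 2; set D := dotv (x1 - y) (u - x1).
have M_ge0 : 0 <= M := norm2_ge0 _.
have u_y : u - y = (x1 - y) + (u - x1) by rewrite [RHS]addrC addrA subrK.
have cQ2 : c * norm2 (u - y) ^+ 2 = c * Q1 + 2 * c * D + c * M ^+ 2.
  by rewrite u_y sqr_norm2D -/Q1 -/D -/M; ring.
have p_split : dotv p (u - y) = dotv p (x1 - y) + dotv p (u - x1) by rewrite u_y dotvDr.
have etD : et^-1 * D = 2 * c * D by rewrite /c; field; rewrite gt_eqF.
have g_lb := strongly_convex_grad_le y u g_sc g_grad; rewrite -/p in g_lb.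
rewrite -/p -/c -/Q1 in g_desc.
apply/ler_addgt0Pr => ep ep_gt0.
have [w [H_subgrad res_small]] := approx_subgrad (ep / (M + 1)) (divr_gt0 ep_gt0 (ltr_wpDl M_ge0 ltr01)).
set e := p + et^-1 *: (x1 - y) + w in res_small.
have w_e : w = e - p - et^-1 *: (x1 - y) by apply/rowP => i; rewrite !mxE; ring.
clearbody e; rewrite w_e !dotvDl !dotvNl dotvZl -/D in H_subgrad.
have e_small : - dotv e (u - x1) <= ep.
  rewrite -dotvNl (le_trans (cauchy_schwarz _ _)) // norm2N -/M.
  have : norm2 e * (M + 1) <= ep by rewrite -ler_pdivlMr ?ltr_wpDl // ltW.
  by have := norm2_ge0 e; nra.
lra.
Qed.

Lemma apg_scalar_le (al et ga th aa ab bb : R) :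
  0 <= mu -> 0 < al <= 1 -> 0 < et -> 0 < ga -> 0 <= bb ->
  al ^+ 2 / et = (1 - al) * ga + al * mu -> th = al * ga / (ga + al * mu) ->
  (1 / (2 * et) - mu / 2) * (al ^+ 2 * aa - 2 * al * th * ab + th ^+ 2 * bb)
    - mu / 2 * al * (1 - al) * aa
  <= (1 - al) * ga / 2 * (aa - 2 * ab + bb).
Proof.
move=> mu_ge0 /andP[al_gt0 al_le1] et_gt0 ga_gt0 bb_ge0 al_et ->.
have s_gt0 : 0 < ga + al * mu by rewrite ltr_wpDr // mulr_ge0 // ltW.
have inv_et : 1 / et = ((1 - al) * ga + al * mu) / al ^+ 2.
  by rewrite -al_et mulrAC divff ?mul1r // expf_neq0 // gt_eqF.
have two_et : 1 / (2 * et) = 1 / et / 2 by rewrite invfM mul1r mulrC mul1r.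
rewrite two_et inv_et; set lhs := (X in X <= _).
(* the two sides differ by a nonnegative multiple of bb *)
have -> : lhs = (1 - al) * ga / 2 * (aa - 2 * ab + bb)
                - (1 - al) * ga * al * mu / (2 * (ga + al * mu)) * bb.
  by rewrite /lhs; field; rewrite !gt_eqF.
rewrite gerBl mulr_ge0 // divr_ge0 //.
  by rewrite !mulr_ge0 ?subr_ge0 // ltW.
by rewrite mulr_ge0 // ltW.
Qed.

Lemma apg_extrapolation_le (al et ga ga1 : R) (xk zk y xs : 'rV[R]_n) :
  0 <= mu -> 0 < al <= 1 -> 0 < et -> 0 < ga -> ga1 = al ^+ 2 / et ->
  al ^+ 2 / et = (1 - al) * ga + al * mu ->
  y = (al * ga + ga1)^-1 *: (al * ga *: zk + ga1 *: xk) ->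
  (1 / (2 * et) - mu / 2) * norm2 (al *: xs + (1 - al) *: xk - y) ^+ 2
    - mu / 2 * al * (1 - al) * norm2 (xs - xk) ^+ 2
  <= (1 - al) * ga / 2 * norm2 (xs - zk) ^+ 2.
Proof.
move=> mu_ge0 al01 et_gt0 ga_gt0 -> al_et ->.
have s_gt0 : 0 < ga + al * mu by rewrite ltr_wpDr // mulr_ge0 // ltW; case/andP: al01.
set th := al * ga / (ga + al * mu).
set a := xs - xk; set b := zk - xk.
have u_y : al *: xs + (1 - al) *: xk - (al * ga + al ^+ 2 / et)^-1 *:
             (al * ga *: zk + al ^+ 2 / et *: xk) = al *: a - th *: b.
  rewrite /a /b /th al_et; apply/rowP => i; rewrite !mxE.
  by field; rewrite gt_eqF // (_ : _ + _ = ga + al * mu) //; ring.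
have xs_zk : xs - zk = a - b by rewrite /a /b opprB addrA subrK.
rewrite u_y xs_zk [norm2 (al *: a - _) ^+ 2]sqr_norm2D [norm2 (a - b) ^+ 2]sqr_norm2D.
rewrite !norm2N !sqr_norm2Z !dotvNr !dotvZl !dotvZr.
have := apg_scalar_le (norm2 a ^+ 2) (dotv a b) mu_ge0 al01 et_gt0 ga_gt0
  (sqr_ge0 (norm2 b)) al_et (erefl th).
lra.
Qed.

Lemma apg_lyapunov_step (al et ga ga1 : R) (xk zk y xk1 zk1 xs : 'rV[R]_n)
    (Hk Hk1 Hs Hu : R) :
  0 <= mu -> 0 < al <= 1 -> 0 < et -> 0 < ga -> ga1 = al ^+ 2 / et ->
  al ^+ 2 / et = (1 - al) * ga + al * mu ->
  y = (al * ga + ga1)^-1 *: (al * ga *: zk + ga1 *: xk) ->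
  g xk1 <= g y + dotv (gradg y) (xk1 - y) + 1 / (2 * et) * norm2 (xk1 - y) ^+ 2 ->
  zk1 = xk + al^-1 *: (xk1 - xk) ->
  Hu <= al * Hs + (1 - al) * Hk ->
  (forall d, 0 < d -> exists w,
     Hk1 + dotv w (al *: xs + (1 - al) *: xk - xk1) <= Hu /\
     norm2 (gradg y + et^-1 *: (xk1 - y) + w) < d) ->
  g xk1 + Hk1 - (g xs + Hs) + ga1 / 2 * norm2 (xs - zk1) ^+ 2
  <= (1 - al) * (g xk + Hk - (g xs + Hs) + ga / 2 * norm2 (xs - zk) ^+ 2).
Proof.
move=> mu_ge0 al01 et_gt0 ga_gt0 ga1_def al_et y_def g_desc zk1_def Hu_le approx_subgrad.
have /andP[al_gt0 al_le1] := al01.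
have descent := inexact_prox_grad_le et_gt0 g_desc approx_subgrad.
have := g_sc xs xk (t := al); rewrite ltW //= al_le1 => /(_ isT) g_u.
have extrapolation := apg_extrapolation_le xs mu_ge0 al01 et_gt0 ga_gt0 ga1_def al_et y_def.
have u_xk1 : 1 / (2 * et) * norm2 (al *: xs + (1 - al) *: xk - xk1) ^+ 2
             = ga1 / 2 * norm2 (xs - zk1) ^+ 2.
  have -> : al *: xs + (1 - al) *: xk - xk1 = al *: (xs - zk1).
    by rewrite zk1_def; apply/rowP => i; rewrite !mxE; field; rewrite gt_eqF.
  by rewrite sqr_norm2Z ga1_def; field; rewrite gt_eqF.
lra.
Qed.

End APGStep.

Lemma apg_param_bounds (R : realType) (mu Lbar al et ga : R) :
  0 < Lbar -> mu <= Lbar -> 0 < et -> et <= 1 / Lbar -> 0 < al -> mu <= ga ->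
  al ^+ 2 / et = (1 - al) * ga + al * mu -> al <= 1 /\ mu <= al ^+ 2 / et.
Proof.
move=> Lbar_gt0 mu_le et_gt0 et_le al_gt0 mu_le_ga al_et.
have et_mu : et * mu <= 1.
  have : et * Lbar <= 1 by rewrite -ler_pdivlMr // mul1r.
  have : et * mu <= et * Lbar by rewrite ler_pM2l.
  lra.
have al2 : al ^+ 2 = et * ((1 - al) * ga + al * mu).
  by rewrite -al_et mulrC divfK // gt_eqF.
have al_le1 : al <= 1.
  rewrite leNgt; apply/negP => al_gt1.
  have : al ^+ 2 <= et * mu by rewrite al2 ler_pM2l //; nra.
  nra.
by split=> //; rewrite al_et; nra.
Qed.

Lemma geometric_decay (R : realType) (u a : nat -> R) (q : R) :
  q <= 1 -> (forall k, 0 <= u k) -> (forall k, q <= a k) ->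
  (forall k, u k.+1 <= (1 - a k) * u k) -> forall k, u k <= (1 - q) ^+ k * u 0%N.
Proof.
move=> q_le1 u_ge0 q_le u_step; elim=> [|k IH]; first by rewrite expr0 mul1r.
apply: (le_trans (u_step k)); rewrite exprS -mulrA.
apply: (@le_trans _ _ ((1 - q) * u k)); first by rewrite ler_wpM2r // lerB.
by rewrite ler_wpM2l // subr_ge0.
Qed.

Section IAPG.
Variables (R : realType) (n : nat).
Variables (g h : 'rV[R]_n -> R) (r : 'rV[R]_n -> \bar R) (gradg : 'rV[R]_n -> 'rV[R]_n).
Variables (mu Lg gdec Lbar Fstar : R) (xstar : 'rV[R]_n).
Variables (x z y : nat -> 'rV[R]_n) (eta alpha gamma eps : nat -> R).
Hypotheses (mu_ge0 : 0 <= mu) (g_sc : strongly_convex mu g) (g_grad : has_gradient g gradg)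
  (h_cvx : convex_fun h) (r_nominfty : no_minfty r) (r_cvx : econvex_fun r).
Hypotheses (F_xstar : ((g xstar + h xstar)%:E + r xstar = Fstar%:E)%E)
  (F_min : forall u, (Fstar%:E <= (g u + h u)%:E + r u)%E).
Hypotheses (Lbar_gt0 : 0 < Lbar) (mu_le_Lbar : mu <= Lbar).
Hypotheses (rx0_fin : r (x 0%N) != +oo%E) (gamma0_ge : mu <= gamma 0%N)
  (params_pos : forall k, 0 < eta k /\ 0 < alpha k /\ 0 < gamma k /\ 0 <= eps k)
  (eta_bounds : forall k, gdec / Lg < eta k <= 1 / Lbar)
  (gamma_rec : forall k, gamma k.+1 = alpha k ^+ 2 / eta k /\
     alpha k ^+ 2 / eta k = (1 - alpha k) * gamma k + alpha k * mu)
  (y_def : forall k, y k = (alpha k * gamma k + gamma k.+1)^-1 *: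
     (alpha k * gamma k *: z k + gamma k.+1 *: x k))
  (subgrad_err : forall k, (dist0 [set v | exists2 w,
     w \in subdiff (fun u => (h u)%:E + r u) (x k.+1) &
     v = (gradg (y k) + (eta k)^-1 *: (x k.+1 - y k) + w)%R] <= (eps k)%:E)%E)
  (g_descent : forall k, g (x k.+1) <= g (y k) + dotv (gradg (y k)) (x k.+1 - y k)
     + 1 / (2 * eta k) * norm2 (x k.+1 - y k) ^+ 2)
  (z_def : forall k, z k.+1 = x k + (alpha k)^-1 *: (x k.+1 - x k))
  (eps0 : forall k, eps k = 0).

Local Notation F u := (g u + h u + fine (r u)).
Local Notation Phi k := (F (x k) - Fstar + gamma k / 2 * norm2 (xstar - z k) ^+ 2).

Lemma Fstar_fin : r xstar \is a fin_num /\ Fstar = F xstar.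
Proof.
have rxs_fin : r xstar \is a fin_num.
  have : ((g xstar + h xstar)%:E + r xstar)%E \is a fin_num by rewrite F_xstar.
  by rewrite fin_numD => /andP[].
by split=> //; apply/eqP; rewrite -(@eqe R) -F_xstar -(fineK rxs_fin) -EFinD.
Qed.

Lemma alpha_le1_mu_le_gamma k : alpha k <= 1 /\ mu <= gamma k.
Proof.
suff mu_le : mu <= gamma k.
  have [eta_gt0 [al_gt0 _]] := params_pos k; have [_ eta_le] := andP (eta_bounds k).
  by case: (apg_param_bounds Lbar_gt0 mu_le_Lbar eta_gt0 eta_le al_gt0 mu_le (gamma_rec k).2).
elim: k => [//|k IH].
have [eta_gt0 [al_gt0 _]] := params_pos k; have [_ eta_le] := andP (eta_bounds k).
have [gk1 rec] := gamma_rec k.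
by rewrite gk1; case: (apg_param_bounds Lbar_gt0 mu_le_Lbar eta_gt0 eta_le al_gt0 IH rec).
Qed.

Lemma approx_subgrad k d : 0 < d -> exists w,
  (((h (x k.+1))%:E + r (x k.+1))%E \is a fin_num /\
   forall u, ((h (x k.+1))%:E + r (x k.+1) + (dotv w (u - x k.+1))%:E
              <= (h u)%:E + r u)%E) /\
  norm2 (gradg (y k) + (eta k)^-1 *: (x k.+1 - y k) + w) < d.
Proof.
move=> d_gt0; have lt_d : (0%:E < d%:E)%E by rewrite lte_fin.
have := subgrad_err k; rewrite eps0 => /le_lt_trans /(_ lt_d) /dist0_lt[_ [w w_sub ->] small].
by exists w; move: w_sub; rewrite inE.
Qed.

Lemma r_x_fin k : r (x k) \is a fin_num.
Proof.
case: k => [|k]; first by rewrite fin_numE r_nominfty rx0_fin.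
have [w [[hr_fin _] _]] := approx_subgrad k ltr01.
by move: hr_fin; rewrite fin_numD => /andP[].
Qed.

Lemma lyapunov_step k : Phi k.+1 <= (1 - alpha k) * Phi k.
Proof.
have [eta_gt0 [al_gt0 [ga_gt0 _]]] := params_pos k.
have al01 : 0 < alpha k <= 1 by rewrite al_gt0 (alpha_le1_mu_le_gamma k).1.
have [rxs_fin Fstar_def] := Fstar_fin.
set u := alpha k *: xstar + (1 - alpha k) *: x k.
have [ru_fin H_u] := convex_add_econvex_le h_cvx r_nominfty r_cvx rxs_fin (r_x_fin k) al01.
have subgrad d : 0 < d -> exists w,
    h (x k.+1) + fine (r (x k.+1)) + dotv w (u - x k.+1) <= h u + fine (r u) /\
    norm2 (gradg (y k) + (eta k)^-1 *: (x k.+1 - y k) + w) < d.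
  move=> d_gt0; have [w [[_ w_sub] small]] := approx_subgrad k d_gt0.
  exists w; split=> //; have := w_sub u.
  by rewrite -(fineK ru_fin) -(fineK (r_x_fin k.+1)) -!EFinD lee_fin.
have := apg_lyapunov_step g_sc g_grad mu_ge0 al01 eta_gt0 ga_gt0
  (gamma_rec k).1 (gamma_rec k).2 (y_def k) (g_descent k) (z_def k) H_u subgrad.
by rewrite Fstar_def; lra.
Qed.

Lemma lyapunov_ge0 k : 0 <= Phi k.
Proof.
have [_ [_ [ga_gt0 _]]] := params_pos k.
have : Fstar <= F (x k).
  by have := F_min (x k); rewrite -(fineK (r_x_fin k)) -EFinD lee_fin.
have := sqr_ge0 (norm2 (xstar - z k)); have : 0 < gamma k / 2 by rewrite divr_gt0.
nra.
Qed.

Lemma sqrt_rate_le_alpha k : Num.sqrt (gdec * mu / Lg) <= alpha k.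
Proof.
have [eta_gt0 [al_gt0 _]] := params_pos k; have [eta_lb _] := andP (eta_bounds k).
have [_ mu_le] := alpha_le1_mu_le_gamma k.+1.
have al2 : alpha k ^+ 2 = eta k * gamma k.+1.
  by rewrite (gamma_rec k).1 mulrC divfK // gt_eqF.
rewrite -(ger0_norm (ltW al_gt0)) -sqrtr_sqr ler_wsqrtr // al2 mulrAC.
apply: (@le_trans _ _ (eta k * mu)); first by rewrite ler_wpM2r // ltW.
by rewrite ler_pM2l.
Qed.

Lemma sqrt_rate_le1 : Num.sqrt (gdec * mu / Lg) <= 1.
Proof. exact: le_trans (sqrt_rate_le_alpha 0) (alpha_le1_mu_le_gamma 0).1. Qed.

Lemma value_gap k :
  F (x k) - Fstar <= (1 - Num.sqrt (gdec * mu / Lg)) ^+ k * Phi 0%N.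
Proof.
apply: le_trans (geometric_decay sqrt_rate_le1 lyapunov_ge0 sqrt_rate_le_alpha
  lyapunov_step k).
have [_ [_ [ga_gt0 _]]] := params_pos k.
by rewrite lerDl mulr_ge0 ?sqr_ge0 // divr_ge0 // ltW.
Qed.

End IAPG.

Lemma prox_grad_step_const (R : realType) (L gdec Lbar et : R) :
  0 < gdec -> 0 < L -> 0 < Lbar -> gdec / L < et -> et <= 1 / Lbar ->
  (L + et^-1) * Num.sqrt et <= L / Num.sqrt Lbar + Num.sqrt (L / gdec).
Proof.
move=> gdec_gt0 L_gt0 Lbar_gt0 et_lb et_ub.
have et_gt0 : 0 < et by apply: le_lt_trans et_lb; rewrite divr_ge0 // ltW.
have sqrt_et_gt0 : 0 < Num.sqrt et by rewrite sqrtr_gt0.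
have sqrt_et_le : Num.sqrt et <= (Num.sqrt Lbar)^-1.
  by rewrite -sqrtrV ?(ltW Lbar_gt0) //; apply: ler_wsqrtr; rewrite -div1r.
have inv_sqrt_et_le : (Num.sqrt et)^-1 <= Num.sqrt (L / gdec).
  rewrite -sqrtrV ?(ltW et_gt0) //; apply: ler_wsqrtr.
  by rewrite -invf_div lef_pV2 ?posrE ?divr_gt0 // ltW.
rewrite mulrDl; have -> : et^-1 * Num.sqrt et = (Num.sqrt et)^-1.
  by rewrite -{1}(sqr_sqrtr (ltW et_gt0)) expr2 invfM -mulrA mulVf ?mulr1 // gt_eqF.
by rewrite lerD // ler_wpM2l // ltW.
Qed.

Section ProxGradResidual.
Variables (R : realType) (n : nat).
Variables (g h : 'rV[R]_n -> R) (r : 'rV[R]_n -> \bar R) (gradg gradh : 'rV[R]_n -> 'rV[R]_n).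
Variables (Lg Lh gdec Lbar et : R) (x xt : 'rV[R]_n).
Hypotheses (g_cvx : convex_fun g) (g_grad : has_gradient g gradg) (Lg_gt0 : 0 < Lg)
  (g_lip : lipschitz_map gradg Lg) (h_cvx : convex_fun h) (h_grad : has_gradient h gradh)
  (Lh_ge0 : 0 <= Lh) (h_lip : lipschitz_map gradh Lh)
  (r_nominfty : no_minfty r) (r_cvx : econvex_fun r).
Hypotheses (gdec_gt0 : 0 < gdec) (Lbar_gt0 : 0 < Lbar)
  (et_lb : gdec / (Lg + Lh) < et) (et_ub : et <= 1 / Lbar)
  (xt_prox : is_prox et r (x - et *: (gradg x + gradh x)) xt)
  (rx_fin : r x \is a fin_num).

Local Notation G u := (gradg u + gradh u).
Local Notation F u := (g u + h u + fine (r u)).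
Local Notation v := (x - et *: G x).

Let L_gt0 : 0 < Lg + Lh. Proof. by rewrite ltr_wpDr. Qed.
Let et_gt0 : 0 < et. Proof. by apply: le_lt_trans et_lb; rewrite divr_ge0 // ltW. Qed.
Let rxt_fin : r xt \is a fin_num.
Proof. exact: (prox_fin_num et_gt0 r_nominfty xt_prox rx_fin). Qed.

Lemma prox_grad_subdiff :
  subdiff (fun u => (g u + h u)%:E + r u) xt (G xt + et^-1 *: (v - xt)).
Proof.
split=> [|w]; first by rewrite fin_numD rxt_fin andbT.
have [rw_fin|] := boolP (r w \is a fin_num); last first.
  by rewrite fin_numE r_nominfty /= negbK => /eqP ->; rewrite addey ?leey.
have := prox_subgradient et_gt0 r_nominfty r_cvx xt_prox rxt_fin rw_fin.
rewrite -(fineK rxt_fin) -(fineK rw_fin) -!EFinD lee_fin !dotvDl.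
have := strongly_convex_grad_le xt w (convex_strongly_convex0 g_cvx) g_grad.
have := strongly_convex_grad_le xt w (convex_strongly_convex0 h_cvx) h_grad.
lra.
Qed.

Lemma prox_grad_residual_le :
  norm2 (G xt + et^-1 *: (v - xt)) <= (Lg + Lh + et^-1) * norm2 (xt - x).
Proof.
have -> : G xt + et^-1 *: (v - xt)
          = (gradg xt - gradg x) + (gradh xt - gradh x) - et^-1 *: (xt - x).
  by apply/rowP => i; rewrite !mxE; field; rewrite gt_eqF.
rewrite (le_trans (ler_norm2D _ _)) // norm2N norm2Z ger0_norm ?invr_ge0 ?(ltW et_gt0) //.
rewrite !mulrDl lerD // (le_trans (ler_norm2D _ _)) //.
exact: lerD.
Qed.

Lemma prox_grad_decrease :
  g xt + h xt <= g x + h x + dotv (G x) (xt - x) + 1 / (2 * et) * norm2 (xt - x) ^+ 2 ->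
  F xt + 1 / (2 * et) * norm2 (xt - x) ^+ 2 <= F x.
Proof.
move=> gh_descent.
have := prox_subgradient et_gt0 r_nominfty r_cvx xt_prox rxt_fin rx_fin.
have -> : et^-1 *: (v - xt) = et^-1 *: (x - xt) - G x.
  by apply/rowP => i; rewrite !mxE; field; rewrite gt_eqF.
rewrite dotvDl dotvNl dotvZl -sqr_norm2 -[x - xt]opprB norm2N dotvNr.
have -> : et^-1 * norm2 (xt - x) ^+ 2 = 2 * (1 / (2 * et) * norm2 (xt - x) ^+ 2).
  by field; rewrite gt_eqF.
lra.
Qed.

Lemma prox_grad_dist0_le (Fstar P : R) :
  g xt + h xt <= g x + h x + dotv (G x) (xt - x) + 1 / (2 * et) * norm2 (xt - x) ^+ 2 ->
  (forall u, (Fstar%:E <= (g u + h u)%:E + r u)%E) -> F x - Fstar <= P ->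
  (dist0 (subdiff (fun u => (g u + h u)%:E + r u) xt)
   <= (((Lg + Lh) / Num.sqrt Lbar + Num.sqrt ((Lg + Lh) / gdec))
       * Num.sqrt (2 * P))%:E)%E.
Proof.
move=> gh_descent F_min gap_le.
apply: le_trans (dist0_le_norm2 prox_grad_subdiff) _; rewrite lee_fin.
have decrease := prox_grad_decrease gh_descent.
have Fstar_le : Fstar <= F xt.
  by have := F_min xt; rewrite -(fineK rxt_fin) -EFinD lee_fin.
have step_le : norm2 (xt - x) <= Num.sqrt et * Num.sqrt (2 * P).
  rewrite -sqrtrM ?(ltW et_gt0) // -(ger0_norm (norm2_ge0 (xt - x))) -sqrtr_sqr.
  apply: ler_wsqrtr.
  have -> : norm2 (xt - x) ^+ 2 = 2 * et * (1 / (2 * et) * norm2 (xt - x) ^+ 2).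
    by field; rewrite gt_eqF.
  have : 1 / (2 * et) * norm2 (xt - x) ^+ 2 <= P by lra.
  by have := et_gt0; nra.
apply: le_trans prox_grad_residual_le _.
apply: (@le_trans _ _ ((Lg + Lh + et^-1) * (Num.sqrt et * Num.sqrt (2 * P)))).
  by rewrite ler_wpM2l // addr_ge0 ?invr_ge0 ?(ltW et_gt0) ?(ltW L_gt0).
rewrite mulrA ler_wpM2r ?sqrtr_ge0 //.
exact: prox_grad_step_const.
Qed.

End ProxGradResidual.

Theorem theorem3p7 (R : realType) (n : nat)
  (g h : 'rV[R]_n -> R) (r : 'rV[R]_n -> \bar R)
  (gradg gradh : 'rV[R]_n -> 'rV[R]_n)
  (mu Lg Lh gdec Lbar Fstar : R) (xstar : 'rV[R]_n)
  (x z y xt : nat -> 'rV[R]_n) (eta alpha gamma eps etat : nat -> R) :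
  convex_fun g -> 0 <= mu -> strongly_convex mu g ->
  has_gradient g gradg -> 0 < Lg -> lipschitz_map gradg Lg ->
  convex_fun h -> has_gradient h gradh -> 0 <= Lh -> lipschitz_map gradh Lh ->
  proper_fun r -> lsc_fun r -> econvex_fun r ->
  ((g xstar + h xstar)%:E + r xstar = Fstar%:E)%E ->
  (forall u, (Fstar%:E <= (g u + h u)%:E + r u)%E) ->
  0 < gdec < 1 -> 0 < Lbar -> mu <= Lbar -> Lbar <= Lg ->
  x 0%N = z 0%N -> r (x 0%N) != +oo%E -> mu <= gamma 0%N ->
  (forall k, 0 < eta k /\ 0 < alpha k /\ 0 < gamma k /\ 0 <= eps k) ->
  (forall k, gdec / Lg < eta k <= 1 / Lbar) ->
  (forall k, gamma k.+1 = alpha k ^+ 2 / eta k /\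
             alpha k ^+ 2 / eta k = (1 - alpha k) * gamma k + alpha k * mu) ->
  (forall k, y k = (alpha k * gamma k + gamma k.+1)^-1 *:
                   (alpha k * gamma k *: z k + gamma k.+1 *: x k)) ->
  (forall k, (dist0 [set v | exists2 w,
                 w \in subdiff (fun u => (h u)%:E + r u) (x k.+1) &
                 v = (gradg (y k) + (eta k)^-1 *: (x k.+1 - y k) + w)%R]
              <= (eps k)%:E)%E) ->
  (forall k, g (x k.+1) <= g (y k) + dotv (gradg (y k)) (x k.+1 - y k)
                           + 1 / (2 * eta k) * norm2 (x k.+1 - y k) ^+ 2) ->
  (forall k, z k.+1 = x k + (alpha k)^-1 *: (x k.+1 - x k)) ->
  0 < mu -> (forall k, eps k = 0) ->
  (forall k, gdec / (Lg + Lh) < etat k <= 1 / Lbar) ->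
  (forall k, is_prox (etat k) r
                (x k - etat k *: (gradg (x k) + gradh (x k))) (xt k)) ->
  (forall k, g (xt k) + h (xt k)
             <= g (x k) + h (x k) + dotv (gradg (x k) + gradh (x k)) (xt k - x k)
                + 1 / (2 * etat k) * norm2 (xt k - x k) ^+ 2) ->
  let kappa := Lg / (gdec * mu) in
  let CL := (Lg + Lh) / Num.sqrt Lbar + Num.sqrt ((Lg + Lh) / gdec) in
  forall k,
    (dist0 (subdiff (fun u => (g u + h u)%:E + r u) (xt k))
     <= (CL * Num.sqrt (2 * (g (x 0%N) + h (x 0%N) + fine (r (x 0%N)) - Fstar
                             + gamma 0%N / 2 * norm2 (xstar - z 0%N) ^+ 2))
            * powR (1 - Num.sqrt (1 / kappa)) (k%:R / 2))%:E)%E.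
Proof.
move=> g_cvx mu_ge0 g_sc g_grad Lg_gt0 g_lip h_cvx h_grad Lh_ge0 h_lip [r_nominfty _] _ r_cvx
  F_xstar F_min /andP[gdec_gt0 _] Lbar_gt0 mu_le_Lbar _ _ rx0_fin gamma0_ge params_pos
  eta_bounds gamma_rec y_def subgrad_err g_descent z_def _ eps0 etat_bounds xt_prox
  gh_descent kappa CL k.
have [etat_lb etat_ub] := andP (etat_bounds k).
have gap_le := value_gap mu_ge0 g_sc g_grad h_cvx r_nominfty r_cvx F_xstar F_min Lbar_gt0
  mu_le_Lbar rx0_fin gamma0_ge params_pos eta_bounds gamma_rec y_def subgrad_err
  g_descent z_def eps0 k.
have rxk_fin := r_x_fin r_nominfty rx0_fin subgrad_err eps0 k.
apply: le_trans (prox_grad_dist0_le g_cvx g_grad Lg_gt0 g_lip h_cvx h_grad Lh_ge0 h_lip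
  r_nominfty r_cvx gdec_gt0 Lbar_gt0 etat_lb etat_ub (xt_prox k) rxk_fin (gh_descent k)
  F_min gap_le) _.
have q_le1 := sqrt_rate_le1 mu_ge0 Lbar_gt0 mu_le_Lbar gamma0_ge params_pos eta_bounds gamma_rec.
have Phi0_ge0 := lyapunov_ge0 xstar z r_nominfty F_min rx0_fin params_pos subgrad_err eps0 0.
rewrite lee_fin -/CL /kappa div1r invf_div.
rewrite powRrM powR_mulrn ?subr_ge0 // powR12_sqrt ?exprn_ge0 ?subr_ge0 //.
set Phi0 := (_ - Fstar + _).
by rewrite -[CL * _ * _]mulrA -sqrtrM ?mulr_ge0 // -[2 * Phi0 * _]mulrA [Phi0 * _]mulrC.
Qed.
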